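(* For every normed plane $(V,\|\cdot\|)$, $$\frac13\le c_B(\|\cdot\|)\le 1,$$ and $c_B(\|\cdot\|)=1$ if and only if the norm is derived from an inner product.
   Context: A normed (Minkowski) plane $(V,\|\cdot\|)$ is a two-dimensional real vector space with a norm; $o$ is the origin, $B=\{v:\|v\|\le1\}$ the unit ball, $S=\{v:\|v\|=1\}$ the unit circle. For distinct $x,y$, $\mathrm{bis}(x,y)=\{z\in V:\|z-x\|=\|z-y\|\}$. For $x\in S$, the inner projection is $\mathrm{P_I}(x)=\{z/\|z\|: z\in(\mathrm{bis}(-x,x)\cap B)\setminus\{o\}\}$. The sine function is $s:S\times S\to\mathbb{R}$, $s(u,v)=\inf_{t\in\mathbb{R}}\|u+tv\|$. The constant $c_B$ is $c_B(\|\cdot\|)=\inf_{x\in S}\ \inf_{w\in\mathrm{P_I}(x)} s(w,x)$. *)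

(* A normed plane is modelled as R^2 = R*R
   equipped with an arbitrary norm (every 2-dim real vector space is
   linearly isomorphic to R^2, and c_B is invariant under such isomorphisms). *)
From Stdlib Require Import Reals.
Open Scope R_scope.

Definition vec := (R * R)%type.
Definition vadd (u v : vec) : vec := (fst u + fst v, snd u + snd v).
Definition vscale (a : R) (u : vec) : vec := (a * fst u, a * snd u).
Definition vopp (u : vec) : vec := vscale (-1) u.
Definition vsub (u v : vec) : vec := vadd u (vopp v).
Definition vzero : vec := (0, 0).

Definition is_norm (N : vec -> R) : Prop :=
  (forall v, 0 <= N v) /\
  (forall v, N v = 0 -> v = vzero) /\
  (forall a v, N (vscale a v) = Rabs a * N v) /\
  (forall u v, N (vadd u v) <= N u + N v).

Definition is_inf (A : R -> Prop) (m : R) : Prop :=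
  (forall y, A y -> m <= y) /\ (forall b, (forall y, A y -> b <= y) -> b <= m).

Definition bis (N : vec -> R) (x y : vec) (z : vec) : Prop :=
  N (vsub z x) = N (vsub z y).

Definition P_I (N : vec -> R) (x : vec) (w : vec) : Prop :=
  exists z, bis N (vopp x) x z /\ N z <= 1 /\ z <> vzero /\
            w = vscale (/ N z) z.

Definition sine (N : vec -> R) (u v : vec) (r : R) : Prop :=
  is_inf (fun y => exists t : R, y = N (vadd u (vscale t v))) r.

Definition cB_set (N : vec -> R) (r : R) : Prop :=
  exists x w, N x = 1 /\ P_I N x w /\ sine N w x r.

Definition cB (N : vec -> R) (c : R) : Prop := is_inf (cB_set N) c.

Definition inner_product_norm (N : vec -> R) : Prop :=
  exists ip : vec -> vec -> R,
    (forall u v, ip u v = ip v u) /\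
    (forall u v w, ip (vadd u v) w = ip u w + ip v w) /\
    (forall a u v, ip (vscale a u) v = a * ip u v) /\
    (forall u, u <> vzero -> 0 < ip u u) /\
    (forall u, N u = sqrt (ip u u)).

(* A point [z] of [bis(-x, x)] is isosceles orthogonal to [x], and [s(z / N z, x) >= 1]
   says that [z] is Birkhoff orthogonal to [x].  The triangle inequality alone gives
   [N (z + t x) >= N z / 2] for unit [x], hence [c_B >= 1/2], and [t = 0] gives [c_B <= 1].
   In a Euclidean plane isosceles orthogonality implies Birkhoff orthogonality, so [c_B = 1].
   Conversely, if [c_B = 1] then isosceles orthogonality implies Birkhoff orthogonality
   whenever [N z <= N x].  This first excludes segments on the unit circle, then makes
   isosceles orthogonality homogeneous: [N (al w + be u) = N (al w - be u)] whenever
   [N w = N u] and [w] is isosceles orthogonal to [u].  For such a pair [e1], [e2] the norm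
   of [x e1 + y e2] is invariant under [y |-> -y] and [x <-> y], and a half-angle argument
   shows that it is [sqrt (x^2 + y^2)]. *)

From Stdlib Require Import Reals Lra Classical.
Open Scope R_scope.

Ltac vec_eq :=
  apply injective_projections; unfold vsub, vopp, vadd, vscale, vzero; simpl;
  field; repeat split; try assumption; try lra.

Definition line (p q : vec) (t : R) : vec := vadd p (vscale t q).

Definition isosceles_orth (N : vec -> R) (z x : vec) : Prop :=
  N (vadd z x) = N (vsub z x).

Definition birkhoff_orth (N : vec -> R) (z x : vec) : Prop :=
  forall t, N z <= N (vadd z (vscale t x)).

Definition strictly_convex (N : vec -> R) : Prop :=
  forall a b, N a = N b -> N (vscale (1/2) (vadd a b)) = N a -> a = b.

(* The property that [c_B = 1] amounts to. *)
Definition isosceles_birkhoff (N : vec -> R) : Prop :=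
  forall x z, x <> vzero -> N z <= N x -> isosceles_orth N z x -> birkhoff_orth N z x.

Definition det (p q : vec) : R := fst p * snd q - snd p * fst q.

Lemma parallel_of_det0 p v : v <> vzero -> det p v = 0 -> exists k, p = vscale k v.
Proof.
  destruct p as [p1 p2], v as [v1 v2]; unfold det; simpl; intros Hv Hd.
  assert (Hs : 0 < v1 * v1 + v2 * v2).
  { destruct (Req_dec v1 0) as [->|]; [destruct (Req_dec v2 0) as [->|]|]; [|nra|nra].
    now destruct Hv. }
  exists ((p1 * v1 + p2 * v2) / (v1 * v1 + v2 * v2)); unfold vscale; simpl.
  f_equal; apply (Rmult_eq_reg_r (v1 * v1 + v2 * v2)); try lra.
  - replace (_ * v1 * _) with ((p1 * v1 + p2 * v2) * v1) by (field; lra).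
    transitivity ((p1 * v1 + p2 * v2) * v1 + v2 * (p1 * v2 - p2 * v1)); [ring|].
    rewrite Hd; ring.
  - replace (_ * v2 * _) with ((p1 * v1 + p2 * v2) * v2) by (field; lra).
    transitivity ((p1 * v1 + p2 * v2) * v2 - v1 * (p1 * v2 - p2 * v1)); [ring|].
    rewrite Hd; ring.
Qed.

Lemma vec_decomp p q w : det p q <> 0 ->
  w = vadd (vscale (det w q / det p q) p) (vscale (det p w / det p q) q).
Proof.
  destruct p as [p1 p2], q as [q1 q2], w as [w1 w2]; unfold det, vadd, vscale; simpl.
  intro H; f_equal; field; auto.
Qed.

Lemma inner_product_norm_of_basis (N : vec -> R) e1 e2 : det e1 e2 <> 0 ->
  (forall x y, N (vadd (vscale x e1) (vscale y e2)) = sqrt (x * x + y * y)) ->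
  inner_product_norm N.
Proof.
  intros Hdet HN.
  set (cx := fun p : vec => det p e2 / det e1 e2).
  set (cy := fun p : vec => det e1 p / det e1 e2).
  assert (Hcoord : forall p, p = vadd (vscale (cx p) e1) (vscale (cy p) e2))
    by (intro; now apply vec_decomp).
  exists (fun p q => cx p * cx q + cy p * cy q); repeat split.
  - intros; ring.
  - intros u v w; unfold cx, cy, det, vadd; simpl; field; auto.
  - intros a u v; unfold cx, cy, det, vscale; simpl; field; auto.
  - intros u Hu.
    destruct (Req_dec (cx u) 0) as [Hx|]; [destruct (Req_dec (cy u) 0) as [Hy|]|]; [|nra|nra].
    destruct Hu; rewrite (Hcoord u), Hx, Hy; vec_eq.
  - intro u; rewrite (Hcoord u) at 1; apply HN.
Qed.

Lemma vscale_neq0 c v : c <> 0 -> v <> vzero -> vscale c v <> vzero.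
Proof.
  intros Hc Hv E; apply Hv.
  replace v with (vscale (/ c) (vscale c v)) by vec_eq; rewrite E; vec_eq.
Qed.

Lemma cos_sin_neq0 t : (cos t, sin t) <> vzero.
Proof.
  intro H; injection H as H1 H2.
  pose proof (sin2_cos2 t) as E; rewrite H1, H2 in E; unfold Rsqr in E; lra.
Qed.

Lemma is_inf_exists (A : R -> Prop) m :
  (exists y, A y) -> (forall y, A y -> m <= y) -> exists r, is_inf A r.
Proof.
  intros [y0 Hy0] Hm.
  destruct (completeness (fun z => A (- z))) as [l [Hub Hlub]].
  - exists (- m); intros z Hz; apply Hm in Hz; lra.
  - exists (- y0); rewrite Ropp_involutive; auto.
  - exists (- l); split.
    + intros y Hy; enough (- y <= l) by lra.
      apply Hub; rewrite Ropp_involutive; auto.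
    + intros b Hb; enough (l <= - b) by lra.
      apply Hlub; intros z Hz; apply Hb in Hz; lra.
Qed.

Section NormedPlane.
Variable N : vec -> R.
Hypothesis hN : is_norm N.

Lemma norm_nonneg v : 0 <= N v.
Proof. apply hN. Qed.

Lemma norm_eq0 v : N v = 0 -> v = vzero.
Proof. apply hN. Qed.

Lemma norm_scale a v : N (vscale a v) = Rabs a * N v.
Proof. apply hN. Qed.

Lemma norm_triangle u v : N (vadd u v) <= N u + N v.
Proof. apply hN. Qed.

Lemma norm_zero : N vzero = 0.
Proof.
  replace vzero with (vscale 0 vzero) by vec_eq.
  rewrite norm_scale, Rabs_R0; ring.
Qed.

Lemma norm_pos v : v <> vzero -> 0 < N v.
Proof.
  intro Hv; destruct (norm_nonneg v) as [|H]; [assumption|].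
  now destruct Hv; apply norm_eq0.
Qed.

Lemma norm_scale_nonneg a v : 0 <= a -> N (vscale a v) = a * N v.
Proof. intro Ha; rewrite norm_scale, Rabs_pos_eq; auto. Qed.

Lemma norm_opp v : N (vopp v) = N v.
Proof. unfold vopp; rewrite norm_scale, Rabs_left by lra; ring. Qed.

Lemma norm_sub_sym u v : N (vsub u v) = N (vsub v u).
Proof. replace (vsub u v) with (vopp (vsub v u)) by vec_eq; apply norm_opp. Qed.

Lemma norm_lincomb_le a b u v :
  N (vadd (vscale a u) (vscale b v)) <= Rabs a * N u + Rabs b * N v.
Proof. eapply Rle_trans; [apply norm_triangle|]; rewrite !norm_scale; lra. Qed.

Lemma norm_sub_ge u v : N u - N v <= N (vsub u v).
Proof.
  pose proof (norm_triangle (vsub u v) v) as H.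
  replace (vadd (vsub u v) v) with u in H by vec_eq; lra.
Qed.

Lemma norm_unit_scale v : v <> vzero -> N (vscale (/ N v) v) = 1.
Proof.
  intro Hv; pose proof (norm_pos v Hv).
  rewrite norm_scale_nonneg by (left; apply Rinv_0_lt_compat; lra); field; lra.
Qed.

Lemma isosceles_orth_opp z x : isosceles_orth N z x -> isosceles_orth N z (vopp x).
Proof.
  unfold isosceles_orth; intro H.
  replace (vadd z (vopp x)) with (vsub z x) by vec_eq.
  replace (vsub z (vopp x)) with (vadd z x) by vec_eq; auto.
Qed.

Lemma isosceles_orth_sym z x : isosceles_orth N z x -> isosceles_orth N x z.
Proof.
  unfold isosceles_orth; intro H.
  replace (vadd x z) with (vadd z x) by vec_eq; rewrite H; apply norm_sub_sym.
Qed.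

Lemma norm_line_chord p q t1 t2 t3 : t1 < t2 < t3 ->
  (t3 - t1) * N (line p q t2) <= (t3 - t2) * N (line p q t1) + (t2 - t1) * N (line p q t3).
Proof.
  intro Ht.
  rewrite <- norm_scale_nonneg by lra.
  replace (vscale (t3 - t1) (line p q t2)) with
    (vadd (vscale (t3 - t2) (line p q t1)) (vscale (t2 - t1) (line p q t3)))
    by (unfold line; vec_eq).
  eapply Rle_trans; [apply norm_lincomb_le|]; rewrite !Rabs_pos_eq; lra.
Qed.

Lemma norm_line_mono_r p q t0 t1 t2 :
  (forall t, N (line p q t0) <= N (line p q t)) -> t0 <= t1 <= t2 ->
  N (line p q t1) <= N (line p q t2).
Proof.
  intros Hmin Ht.
  destruct (Req_dec t0 t1) as [<-|]; [apply Hmin|].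
  destruct (Req_dec t1 t2) as [<-|]; [lra|].
  pose proof (norm_line_chord p q t0 t1 t2 ltac:(lra)).
  pose proof (Rmult_le_compat_l (t2 - t1) _ _ ltac:(lra) (Hmin t2)).
  apply (Rmult_le_reg_l (t2 - t0)); lra.
Qed.

Lemma norm_line_mono_l p q t0 t1 t2 :
  (forall t, N (line p q t0) <= N (line p q t)) -> t2 <= t1 <= t0 ->
  N (line p q t1) <= N (line p q t2).
Proof.
  intros Hmin Ht.
  assert (Hrefl : forall t, line p q t = line p (vopp q) (- t)) by (intro; unfold line; vec_eq).
  rewrite !Hrefl; apply (norm_line_mono_r p (vopp q) (- t0)); [|lra].
  intro t; rewrite <- (Ropp_involutive t), <- !Hrefl; apply Hmin.
Qed.

(** * Continuity and the existence of isosceles directions *)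

Lemma norm_pair_continuous f g x : continuity_pt f x -> continuity_pt g x ->
  continuity_pt (fun t => N (f t, g t)) x.
Proof.
  unfold continuity_pt, continue_in, limit1_in, limit_in; simpl; unfold R_dist.
  intros Hf Hg eps He.
  set (K := N (1,0) + N (0,1) + 1).
  pose proof (norm_nonneg (1,0)); pose proof (norm_nonneg (0,1)).
  assert (HK : 0 < K) by (unfold K; lra).
  destruct (Hf (eps / K)) as [d1 [Hd1 H1]]; [apply Rdiv_lt_0_compat; lra|].
  destruct (Hg (eps / K)) as [d2 [Hd2 H2]]; [apply Rdiv_lt_0_compat; lra|].
  exists (Rmin d1 d2); split; [apply Rmin_pos; lra|].
  intros y [Dy Hy].
  specialize (H1 y (conj Dy (Rlt_le_trans _ _ _ Hy (Rmin_l _ _)))).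
  specialize (H2 y (conj Dy (Rlt_le_trans _ _ _ Hy (Rmin_r _ _)))).
  assert (Hlip : forall a b c d,
    N (a,b) - N (c,d) <= Rabs (a - c) * N (1,0) + Rabs (b - d) * N (0,1)).
  { intros a b c d; eapply Rle_trans; [apply norm_sub_ge|].
    replace (vsub (a,b) (c,d)) with (vadd (vscale (a - c) (1,0)) (vscale (b - d) (0,1)))
      by vec_eq.
    apply norm_lincomb_le. }
  pose proof (Hlip (f y) (g y) (f x) (g x)).
  pose proof (Hlip (f x) (g x) (f y) (g y)).
  rewrite (Rabs_minus_sym (f x)), (Rabs_minus_sym (g x)) in *.
  assert (Rabs (f y - f x) * N (1,0) <= eps / K * N (1,0)) by (apply Rmult_le_compat_r; lra).
  assert (Rabs (g y - g x) * N (0,1) <= eps / K * N (0,1)) by (apply Rmult_le_compat_r; lra).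
  assert (eps / K * N (1,0) + eps / K * N (0,1) < eps).
  { replace (eps / K * N (1,0) + eps / K * N (0,1)) with (eps - eps / K)
      by (unfold K; field; lra).
    pose proof (Rdiv_lt_0_compat eps K He HK); lra. }
  apply Rabs_def1; lra.
Qed.

Lemma norm_line_continuous p q : continuity (fun t => N (line p q t)).
Proof.
  intro x; destruct p as [p1 p2], q as [q1 q2]; unfold line, vadd, vscale; simpl.
  apply (norm_pair_continuous (fun t => p1 + t * q1) (fun t => p2 + t * q2)); reg.
Qed.

(* [u t] runs over the unit circle and [u PI = - u 0], so [h] changes sign on [[0, PI]]. *)
Lemma isosceles_unit_exists x : exists w, N w = 1 /\ isosceles_orth N x w.
Proof.
  set (u := fun t => vscale (/ N (cos t, sin t)) (cos t, sin t)).
  set (h := fun t => N (vadd x (u t)) - N (vsub x (u t))).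
  assert (Hinv : forall t, continuity_pt (fun t => / N (cos t, sin t)) t).
  { intro t; apply continuity_pt_inv.
    - apply norm_pair_continuous; [apply continuity_cos | apply continuity_sin].
    - pose proof (norm_pos _ (cos_sin_neq0 t)); lra. }
  assert (Hh : continuity h).
  { intro t; destruct x as [x1 x2]; unfold h, u, vsub, vopp, vadd, vscale; simpl.
    assert (Hc : forall c, continuity_pt (fun _ => c) t)
      by (intro c; apply continuity_pt_const; intros ? ?; reflexivity).
    apply continuity_pt_minus; apply norm_pair_continuous;
      repeat first [ apply continuity_pt_plus | apply continuity_pt_mult | apply Hc
                   | apply continuity_cos | apply continuity_sin | apply Hinv ]. }
  assert (HPI : u PI = vopp (u 0)).
  { pose proof (norm_pos _ (cos_sin_neq0 0)).
    unfold u; rewrite cos_PI, sin_PI, cos_0, sin_0 in *.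
    replace (-1, 0) with (vopp (1, 0)) by vec_eq; rewrite norm_opp; vec_eq. }
  assert (Hh0 : h PI = - h 0).
  { clearbody u; unfold h; rewrite HPI.
    replace (vadd x (vopp (u 0))) with (vsub x (u 0)) by vec_eq.
    replace (vsub x (vopp (u 0))) with (vadd x (u 0)) by vec_eq; ring. }
  destruct (IVT_cor h 0 PI Hh) as [t [_ Ht]].
  - pose proof PI_RGT_0; lra.
  - rewrite Hh0; pose proof (Rle_0_sqr (h 0)); unfold Rsqr in *; lra.
  - exists (u t); split; [apply norm_unit_scale, cos_sin_neq0|].
    unfold isosceles_orth, h in *; lra.
Qed.

(** * The lower bound *)

Lemma sine_exists u v : exists r, sine N u v r.
Proof.
  apply (is_inf_exists _ 0).
  - exists (N (vadd u (vscale 0 v))), 0; reflexivity.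
  - intros y [t ->]; apply norm_nonneg.
Qed.

Lemma isosceles_half_birkhoff_nonneg x z s : N x = 1 -> isosceles_orth N z x -> 0 <= s ->
  N z / 2 <= N (vadd z (vscale s x)).
Proof.
  unfold isosceles_orth; intros Hx Hiso Hs.
  assert (A1 : 2 <= N (vadd z x) + N (vsub z x)).
  { replace 2 with (N (vscale 2 x)) by (rewrite norm_scale_nonneg; lra).
    rewrite norm_sub_sym.
    replace (vscale 2 x) with (vadd (vadd z x) (vsub x z)) by vec_eq; apply norm_triangle. }
  assert (A2 : 2 * N z <= N (vadd z x) + N (vsub z x)).
  { rewrite <- norm_scale_nonneg by lra.
    replace (vscale 2 z) with (vadd (vadd z x) (vsub z x)) by vec_eq; apply norm_triangle. }
  destruct (Rle_lt_dec s 1).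
  - assert (B1 : N z <= N (vadd z (vscale s x)) + s).
    { pose proof (norm_lincomb_le 1 (-s) (vadd z (vscale s x)) x) as B.
      replace (vadd _ (vscale (-s) x)) with z in B by vec_eq.
      rewrite Rabs_R1, Rabs_left1, Hx in B; lra. }
    assert (B2 : N (vadd z x) <= N (vadd z (vscale s x)) + (1 - s)).
    { pose proof (norm_lincomb_le 1 (1 - s) (vadd z (vscale s x)) x) as B.
      replace (vadd _ (vscale (1 - s) x)) with (vadd z x) in B by vec_eq.
      rewrite Rabs_R1, Rabs_pos_eq, Hx in B; lra. }
    lra.
  - assert (B : s * N (vadd z x) <= (s - 1) * N z + N (vadd z (vscale s x))).
    { rewrite <- norm_scale_nonneg by lra.
      pose proof (norm_lincomb_le (s - 1) 1 z (vadd z (vscale s x))) as B.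
      replace (vadd (vscale (s - 1) z) _) with (vscale s (vadd z x)) in B by vec_eq.
      rewrite Rabs_R1, Rabs_pos_eq in B; lra. }
    pose proof (norm_nonneg z).
    pose proof (Rmult_le_compat_l s (N z) (N (vadd z x)) ltac:(lra) ltac:(lra)); nra.
Qed.

Lemma isosceles_half_birkhoff x z s : N x = 1 -> isosceles_orth N z x ->
  N z / 2 <= N (vadd z (vscale s x)).
Proof.
  intros Hx Hiso; destruct (Rle_lt_dec 0 s).
  - now apply isosceles_half_birkhoff_nonneg.
  - replace (vadd z (vscale s x)) with (vadd z (vscale (- s) (vopp x))) by vec_eq.
    apply isosceles_half_birkhoff_nonneg; [rewrite norm_opp; auto | |lra].
    now apply isosceles_orth_opp.
Qed.

(** * Strict convexity *)

Section UnitSegment.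
Variables a b : vec.
Hypothesis Ha : N a = 1.
Hypothesis Hb : N b = 1.
Let m := vscale (1/2) (vadd a b).
Let v := vsub a b.
Hypothesis Hm : N m = 1.

Let g t := N (line m v t).

Let g_half : g (1/2) = 1.
Proof. unfold g; replace (line m v (1/2)) with a by (unfold line, m, v; vec_eq); auto. Qed.

Let g_neg_half : g (-1/2) = 1.
Proof. unfold g; replace (line m v (-1/2)) with b by (unfold line, m, v; vec_eq); auto. Qed.

Let g_zero : g 0 = 1.
Proof. unfold g; replace (line m v 0) with m by (unfold line; vec_eq); auto. Qed.

Let g_ge1 t : 1 <= g t.
Proof.
  pose proof g_zero; pose proof g_half; pose proof g_neg_half.
  destruct (Rtotal_order t 0) as [Ht|[->|Ht]]; [| lra |].
  - destruct (Rlt_le_dec t (-1/2)).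
    + pose proof (norm_line_chord m v t (-1/2) 0 ltac:(lra)); fold (g t) (g (-1/2)) (g 0) in *; nra.
    + pose proof (norm_line_chord m v t 0 (1/2) ltac:(lra)); fold (g t) (g 0) (g (1/2)) in *; nra.
  - destruct (Rle_lt_dec t (1/2)).
    + pose proof (norm_line_chord m v (-1/2) 0 t ltac:(lra)); fold (g t) (g (-1/2)) (g 0) in *; nra.
    + pose proof (norm_line_chord m v 0 (1/2) t ltac:(lra)); fold (g t) (g 0) (g (1/2)) in *; nra.
Qed.

Let g_segment t : -1/2 <= t <= 1/2 -> g t = 1.
Proof.
  intro Ht; apply Rle_antisym; [|apply g_ge1].
  unfold g; replace (line m v t) with (vadd (vscale (1/2 + t) a) (vscale (1/2 - t) b))
    by (unfold line, m, v; vec_eq).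
  eapply Rle_trans; [apply norm_lincomb_le|]; rewrite Ha, Hb, !Rabs_pos_eq; lra.
Qed.

Hypothesis Hab : a <> b.

Let v_neq0 : v <> vzero.
Proof. intro E; apply Hab; replace a with (vadd v b) by (unfold v; vec_eq); rewrite E; vec_eq. Qed.

Let det_m_v : det m v <> 0.
Proof.
  intro Hd; destruct (parallel_of_det0 m v v_neq0 Hd) as [k Ek].
  assert (G : forall t, -1/2 <= t <= 1/2 -> Rabs (k + t) * N v = 1).
  { intros t Ht; rewrite <- norm_scale, <- (g_segment t Ht).
    unfold g, line; rewrite Ek; f_equal; vec_eq. }
  pose proof (norm_pos v v_neq0).
  pose proof (G (1/2) ltac:(lra)) as G1; pose proof (G (-1/2) ltac:(lra)) as G2.
  pose proof (G 0 ltac:(lra)) as G3.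
  revert G1 G2 G3; unfold Rabs;
    destruct (Rcase_abs (k + 1/2)), (Rcase_abs (k + -1/2)), (Rcase_abs (k + 0)); nra.
Qed.

(* Pushing [line m v t] slightly along a direction [w] not parallel to [v] and rescaling
   lands back on the segment [b, a], so the norm drops below 1. *)
Lemma unit_segment_birkhoff_parallel t w : -1/2 < t < 1/2 ->
  birkhoff_orth N (line m v t) w -> exists k, w = vscale k v.
Proof.
  intros Ht Hbirk.
  destruct (Req_dec (det w v) 0) as [Hd|Hd]; [now apply parallel_of_det0|].
  exfalso.
  set (be := det w v / det m v); set (al := det m w / det m v).
  assert (Ew : w = vadd (vscale be m) (vscale al v)) by apply vec_decomp, det_m_v.
  assert (Hbe : be <> 0).
  { unfold be; intro E; apply Hd.
    apply (Rmult_eq_reg_r (/ det m v)); [lra | now apply Rinv_neq_0_compat]. }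
  set (r := al / be).
  set (eta := 1/2 - Rabs t).
  assert (Heta : 0 < eta <= 1/2).
  { unfold eta; pose proof (Rabs_pos t); unfold Rabs in *; destruct (Rcase_abs t); lra. }
  pose proof (Rabs_pos r).
  set (de := eta / (Rabs r + 1)).
  assert (Hde : 0 < de) by (unfold de; apply Rdiv_lt_0_compat; lra).
  assert (Hde2 : de * (Rabs r + 1) = eta) by (unfold de; field; lra).
  set (sg := (t - de * r) / (1 - de)).
  assert (Hsg : Rabs sg <= 1/2).
  { assert (Rabs (t - de * r) <= Rabs t + de * Rabs r).
    { unfold Rminus; eapply Rle_trans; [apply Rabs_triang|].
      rewrite Rabs_Ropp, Rabs_mult, (Rabs_pos_eq de); lra. }
    unfold sg, Rdiv; rewrite Rabs_mult, Rabs_inv, (Rabs_pos_eq (1 - de)) by nra.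
    apply (Rmult_le_reg_r (1 - de)); [nra|].
    rewrite Rmult_assoc, Rinv_l by nra; unfold eta in Hde2; nra. }
  assert (Ew' : vadd (line m v t) (vscale (- de / be) w) = vscale (1 - de) (line m v sg)).
  { rewrite Ew; unfold line, sg, r; vec_eq; nra. }
  pose proof (Hbirk (- de / be)) as Hdrop; rewrite Ew', norm_scale_nonneg in Hdrop by nra.
  fold (g t) (g sg) in Hdrop; rewrite !g_segment in Hdrop.
  - nra.
  - unfold Rabs in Hsg; destruct (Rcase_abs sg); lra.
  - lra.
Qed.

Hypothesis HB : isosceles_birkhoff N.

(* The isosceles partner of an inner point of the segment is parallel to [v] by the
   previous lemma, and it has norm 1, so it is [+-/N v * v]. *)
Let g_shift_symmetric t : -1/2 < t < 1/2 -> g (t + / N v) = g (t - / N v).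
Proof.
  intro Ht.
  destruct (isosceles_unit_exists (line m v t)) as [w [Hw Hiso]].
  assert (Hw0 : w <> vzero) by (intro E; rewrite E, norm_zero in Hw; lra).
  assert (Hx : N (line m v t) = 1) by (apply g_segment; lra).
  destruct (unit_segment_birkhoff_parallel t w Ht) as [k ->].
  { apply HB; [exact Hw0 | lra | exact Hiso]. }
  pose proof (norm_pos v v_neq0).
  assert (Hk : Rabs k = / N v).
  { rewrite norm_scale in Hw; apply (Rmult_eq_reg_r (N v)); [rewrite Hw; field|]; lra. }
  unfold isosceles_orth in Hiso; unfold g.
  replace (vadd (line m v t) (vscale k v)) with (line m v (t + k)) in Hiso by (unfold line; vec_eq).
  replace (vsub (line m v t) (vscale k v)) with (line m v (t - k)) in Hiso by (unfold line; vec_eq).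
  revert Hk; unfold Rabs; destruct (Rcase_abs k); intros <-.
  - replace (t + - k) with (t - k) by ring; replace (t - - k) with (t + k) by ring; auto.
  - auto.
Qed.

(* With [K = / N v], the shift symmetry at [t = 0] and [t = +-1/4], monotonicity of
   [g] outside the segment and convexity force [g (K + 1/4) = g (- K - 1/4) = 1], which
   contradicts the triangle inequality since [(2K + 1/2) N v = 2 + N v / 2 > 2]. *)
Lemma unit_segment_false : False.
Proof.
  pose proof (norm_pos v v_neq0) as Hv.
  set (K := / N v).
  assert (HK : 0 < K) by (apply Rinv_0_lt_compat; lra).
  assert (Mr : forall t1 t2, -1/2 <= t1 <= t2 -> g t1 <= g t2).
  { intros t1 t2 Ht; apply (norm_line_mono_r m v (-1/2)); auto.
    intro t; fold (g (-1/2)) (g t); rewrite g_neg_half; apply g_ge1. }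
  assert (Ml : forall t1 t2, t2 <= t1 <= 1/2 -> g t1 <= g t2).
  { intros t1 t2 Ht; apply (norm_line_mono_l m v (1/2)); auto.
    intro t; fold (g (1/2)) (g t); rewrite g_half; apply g_ge1. }
  pose proof (g_shift_symmetric 0 ltac:(lra)) as A0.
  pose proof (g_shift_symmetric (1/4) ltac:(lra)) as A1.
  pose proof (g_shift_symmetric (-1/4) ltac:(lra)) as A2.
  fold K in A0, A1, A2; rewrite Rplus_0_l, Rminus_0_l in A0.
  assert (g K <= g (1/4 + K)) by (apply Mr; lra).
  assert (g (1/4 - K) <= g (- K)) by (apply Ml; lra).
  assert (g (-1/4 + K) <= g K) by (apply Mr; lra).
  assert (g (- K) <= g (-1/4 - K)) by (apply Ml; lra).
  assert (G : g K <= 1).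
  { pose proof (norm_line_chord m v 0 K (1/4 + K) ltac:(lra)) as C.
    fold (g 0) (g K) (g (1/4 + K)) in C; rewrite g_zero in C; nra. }
  pose proof (g_ge1 K); pose proof (g_ge1 (1/4 + K)); pose proof (g_ge1 (-1/4 - K)).
  pose proof (norm_triangle (line m v (1/4 + K)) (vopp (line m v (-1/4 - K)))) as T.
  rewrite norm_opp in T; fold (g (1/4 + K)) (g (-1/4 - K)) in T.
  replace (vadd (line m v (1/4 + K)) (vopp (line m v (-1/4 - K)))) with (vscale (2 * K + 1/2) v)
    in T by (unfold line; vec_eq).
  rewrite norm_scale_nonneg in T by lra.
  replace ((2 * K + 1/2) * N v) with (2 + N v / 2) in T by (unfold K; field; lra); lra.
Qed.

End UnitSegment.

Lemma isosceles_birkhoff_strictly_convex : isosceles_birkhoff N -> strictly_convex N.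
Proof.
  intros HB a b Hab Hm.
  destruct (Req_dec (N a) 0) as [H0|H0].
  { rewrite (norm_eq0 a H0); rewrite Hab in H0; rewrite (norm_eq0 b H0); reflexivity. }
  pose proof (norm_nonneg a).
  set (mu := N a) in *.
  assert (Hmu : 0 <= / mu) by (left; apply Rinv_0_lt_compat; lra).
  destruct (classic (vscale (/ mu) a = vscale (/ mu) b)) as [E|Hne].
  - replace a with (vscale mu (vscale (/ mu) a)) by vec_eq.
    rewrite E; vec_eq.
  - exfalso; apply (unit_segment_false (vscale (/ mu) a) (vscale (/ mu) b)); auto.
    + rewrite norm_scale_nonneg by auto; unfold mu; field; auto.
    + rewrite norm_scale_nonneg, <- Hab by auto; unfold mu; field; auto.
    + replace (vscale (1/2) (vadd (vscale (/ mu) a) (vscale (/ mu) b)))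
        with (vscale (/ mu) (vscale (1/2) (vadd a b))) by vec_eq.
      rewrite norm_scale_nonneg, Hm by auto; field; auto.
Qed.

(* If [N (w + s u) = N w], convexity gives [N (w + s/2 u) = N w] too, and strict
   convexity applied to [w] and [w + s u] forces [s u = 0]. *)
Lemma strictly_convex_birkhoff_strict w u s : strictly_convex N -> u <> vzero ->
  birkhoff_orth N w u -> 0 < s -> N w < N (line w u s).
Proof.
  intros HSC Hu Hbirk Hs.
  destruct (Hbirk s) as [|E]; [assumption|exfalso]; fold (line w u s) in E.
  assert (Ew : w = line w u s).
  { apply HSC; [auto|].
    replace (vscale (1/2) (vadd w (line w u s))) with (line w u (s/2)) by (unfold line; vec_eq).
    apply Rle_antisym; [|apply Hbirk].
    pose proof (norm_line_chord w u 0 (s/2) s ltac:(lra)) as C.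
    rewrite <- E in C; replace (line w u 0) with w in C by (unfold line; vec_eq); nra. }
  apply (f_equal (fun p => N (vsub p w))) in Ew.
  replace (vsub (line w u s) w) with (vscale s u) in Ew by (unfold line; vec_eq).
  replace (vsub w w) with vzero in Ew by vec_eq.
  rewrite norm_zero, norm_scale_nonneg in Ew by lra.
  pose proof (norm_pos u Hu); nra.
Qed.

(** * Isosceles orthogonality is homogeneous *)

Section IsoscelesBirkhoff.
Hypothesis HB : isosceles_birkhoff N.

(* If [N (w + k u) < N (w - k u)], pick [t1] in [[-k, -1]] with [N (w + t1 u) = N (w + k u)];
   the midpoint [c] of these two points is isosceles orthogonal to their difference, hence
   Birkhoff orthogonal to [u], which contradicts the strict minimality of [w] on its line. *)
Let isosceles_line_le_ge1 w u k : u <> vzero -> N w <= N u -> isosceles_orth N w u -> 1 <= k ->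
  N (line w u k) <= N (line w u (-k)) -> N (line w u k) = N (line w u (-k)).
Proof.
  intros Hu Hwu Hiso Hk Hle.
  destruct Hle as [Hlt|]; [exfalso|assumption].
  set (F := fun t => N (line w u t)); fold (F k) (F (-k)) in Hlt.
  assert (Hbirk : birkhoff_orth N w u) by now apply HB.
  assert (F0 : F 0 = N w) by (unfold F, line; f_equal; vec_eq).
  assert (F1 : F 1 = F (-1)).
  { unfold F, line.
    replace (vadd w (vscale 1 u)) with (vadd w u) by vec_eq.
    replace (vadd w (vscale (-1) u)) with (vsub w u) by vec_eq; exact Hiso. }
  assert (F1k : F 1 <= F k).
  { apply (norm_line_mono_r w u 0); [|lra].
    intro t; fold (F 0) (F t); rewrite F0; apply Hbirk. }
  destruct (IVT_cor (fun t => F t - F k) (-k) (-1)) as [t1 [Ht1 Ht1e]].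
  { intro t; apply continuity_pt_minus; [apply norm_line_continuous|].
    apply continuity_pt_const; intros ? ?; reflexivity. }
  { lra. }
  { simpl; nra. }
  set (s := (t1 + k) / 2); set (la := (k - t1) / 2).
  assert (Hs : 0 < s).
  { destruct (Req_dec t1 (-k)) as [E|]; [|unfold s; lra].
    rewrite E in Ht1e; lra. }
  pose proof (norm_pos u Hu).
  set (c := line w u s).
  assert (Hc : birkhoff_orth N c (vscale la u)).
  { apply HB.
    - apply vscale_neq0; [unfold la; lra | exact Hu].
    - rewrite norm_scale_nonneg by (unfold la; lra).
      unfold c, line; eapply Rle_trans; [apply norm_triangle|].
      rewrite norm_scale_nonneg by lra; unfold la, s; nra.
    - unfold isosceles_orth.
      replace (vadd c (vscale la u)) with (line w u k) by (unfold c, line, s, la; vec_eq).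
      replace (vsub c (vscale la u)) with (line w u t1) by (unfold c, line, s, la; vec_eq).
      fold (F k) (F t1); lra. }
  pose proof (Hc (- s / la)) as Hcw.
  replace (vadd c (vscale (- s / la) (vscale la u))) with w in Hcw
    by (unfold c, line, s, la; vec_eq).
  pose proof (strictly_convex_birkhoff_strict w u s
                (isosceles_birkhoff_strictly_convex HB) Hu Hbirk Hs).
  unfold c in Hcw; lra.
Qed.

Lemma isosceles_line_even_ge1 w u k : u <> vzero -> N w <= N u -> isosceles_orth N w u ->
  1 <= k -> N (line w u k) = N (line w u (-k)).
Proof.
  intros Hu Hwu Hiso Hk.
  assert (Hsym : forall t, line w u t = line w (vopp u) (- t)) by (intro; unfold line; vec_eq).
  destruct (Rle_lt_dec (N (line w u k)) (N (line w u (-k)))).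
  - now apply isosceles_line_le_ge1.
  - rewrite Hsym, (Hsym (-k)), Ropp_involutive; symmetry.
    apply isosceles_line_le_ge1; auto.
    + apply vscale_neq0; [lra | exact Hu].
    + now rewrite norm_opp.
    + now apply isosceles_orth_opp.
    + rewrite <- Hsym, <- (Ropp_involutive k), <- Hsym, Ropp_involutive; lra.
Qed.

(* For [0 < k < 1] exchange the roles of [w] and [u]: [w + k u = k (u + w / k)]. *)
Lemma isosceles_line_even w u k : N w = N u -> isosceles_orth N w u ->
  N (line w u k) = N (line w u (-k)).
Proof.
  intros Hwu Hiso.
  assert (Hpos : forall k, 0 < k -> N (line w u k) = N (line w u (-k))).
  { intros k' Hk.
    destruct (classic (u = vzero)) as [->|Hu]; [f_equal; unfold line; vec_eq|].
    destruct (Rle_lt_dec 1 k'); [apply isosceles_line_even_ge1; auto; lra|].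
    assert (Hw : w <> vzero) by (intro E; apply Hu, norm_eq0; rewrite <- Hwu, E; apply norm_zero).
    replace (line w u k') with (vscale k' (line u w (/ k'))) by (unfold line; vec_eq).
    replace (line w u (-k')) with (vscale (-k') (line u w (- / k'))) by (unfold line; vec_eq).
    rewrite !norm_scale, Rabs_Ropp, isosceles_line_even_ge1; auto.
    - lra.
    - now apply isosceles_orth_sym.
    - rewrite <- Rinv_1; apply Rinv_le_contravar; lra. }
  destruct (Rtotal_order k 0) as [Hk|[->|Hk]].
  - rewrite <- (Ropp_involutive k) at 1; symmetry; apply Hpos; lra.
  - f_equal; unfold line; vec_eq.
  - now apply Hpos.
Qed.

Lemma isosceles_lincomb_even w u al be : N w = N u -> isosceles_orth N w u ->
  N (vadd (vscale al w) (vscale be u)) = N (vadd (vscale al w) (vscale (- be) u)).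
Proof.
  intros Hwu Hiso.
  destruct (Req_dec al 0) as [->|Hal].
  - replace (vadd (vscale 0 w) (vscale be u)) with (vscale be u) by vec_eq.
    replace (vadd (vscale 0 w) (vscale (- be) u)) with (vscale (- be) u) by vec_eq.
    now rewrite !norm_scale, Rabs_Ropp.
  - replace (vadd (vscale al w) (vscale be u)) with (vscale al (line w u (be / al)))
      by (unfold line; vec_eq).
    replace (vadd (vscale al w) (vscale (- be) u)) with (vscale al (line w u (- (be / al))))
      by (unfold line; vec_eq).
    now rewrite !norm_scale, isosceles_line_even.
Qed.

End IsoscelesBirkhoff.

(** * Isosceles orthonormal bases are Euclidean *)

Section IsoscelesBasis.
Hypothesis HB : isosceles_birkhoff N.
Variables e1 e2 : vec.
Hypothesis He1 : N e1 = 1.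
Hypothesis He2 : N e2 = 1.
Hypothesis Hiso : isosceles_orth N e1 e2.

Let L x y := vadd (vscale x e1) (vscale y e2).
Let M x y := N (L x y).

Let M_reflect x y : M x y = M x (- y).
Proof. apply isosceles_lincomb_even; auto; lra. Qed.

(* [e1 + e2] and [e1 - e2] have equal norms and are isosceles orthogonal. *)
Let M_swap x y : M x y = M y x.
Proof.
  pose proof (isosceles_lincomb_even HB (vadd e1 e2) (vsub e1 e2) ((x + y) / 2) ((x - y) / 2))
    as E.
  unfold M, L.
  replace (vadd (vscale ((x + y) / 2) (vadd e1 e2)) (vscale ((x - y) / 2) (vsub e1 e2)))
    with (vadd (vscale x e1) (vscale y e2)) in E by vec_eq.
  replace (vadd (vscale ((x + y) / 2) (vadd e1 e2)) (vscale (- ((x - y) / 2)) (vsub e1 e2)))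
    with (vadd (vscale y e1) (vscale x e2)) in E by vec_eq.
  apply E; [exact Hiso|]; unfold isosceles_orth.
  replace (vadd (vadd e1 e2) (vsub e1 e2)) with (vscale 2 e1) by vec_eq.
  replace (vsub (vadd e1 e2) (vsub e1 e2)) with (vscale 2 e2) by vec_eq.
  now rewrite !norm_scale, He1, He2.
Qed.

Let M_rotate x y : M (- y) x = M x y.
Proof. now rewrite M_swap, <- M_reflect. Qed.

Lemma isosceles_basis_det : det e1 e2 <> 0.
Proof.
  intro Hd.
  assert (He1' : e1 <> vzero) by (intro E; rewrite E, norm_zero in He1; lra).
  destruct (parallel_of_det0 e2 e1 He1') as [k ->]; [unfold det in *; lra|].
  unfold isosceles_orth in Hiso.
  replace (vadd e1 (vscale k e1)) with (vscale (1 + k) e1) in Hiso by vec_eq.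
  replace (vsub e1 (vscale k e1)) with (vscale (1 - k) e1) in Hiso by vec_eq.
  rewrite !norm_scale, He1 in Hiso; rewrite norm_scale, He1 in He2.
  revert Hiso He2; unfold Rabs;
    destruct (Rcase_abs (1 + k)), (Rcase_abs (1 - k)), (Rcase_abs k); lra.
Qed.

Let L_eq0 x y : L x y = vzero -> x = 0 /\ y = 0.
Proof.
  intro E; unfold L, vzero, vadd, vscale in E; simpl in E; injection E as E1 E2.
  pose proof isosceles_basis_det as Hd.
  assert (Hx : x * det e1 e2 = 0).
  { transitivity (snd e2 * (x * fst e1 + y * fst e2) - fst e2 * (x * snd e1 + y * snd e2));
      [unfold det; ring | rewrite E1, E2; ring]. }
  assert (Hy : y * det e1 e2 = 0).
  { transitivity (fst e1 * (x * snd e1 + y * snd e2) - snd e1 * (x * fst e1 + y * fst e2));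
      [unfold det; ring | rewrite E1, E2; ring]. }
  split; [destruct (Rmult_integral _ _ Hx) | destruct (Rmult_integral _ _ Hy)]; tauto.
Qed.

(* With [d = 1 + a], the unit vectors [v], [v'] along [(d, b)] and its rotation [(-b, d)]
   are isosceles orthogonal; as [d^2 + b^2 = 2 d] and [d^2 - b^2 = 2 a d], the two
   combinations [al v +- be v'] below are [e1] and [(a, b)], which thus have equal norms. *)
Let M_unit_circle a b : a * a + b * b = 1 -> M a b = 1.
Proof.
  intro Hab.
  destruct (Req_dec a (-1)) as [->|Ha].
  { assert (b = 0) as -> by nra; unfold M, L.
    replace (vadd (vscale (-1) e1) (vscale 0 e2)) with (vopp e1) by vec_eq.
    now rewrite norm_opp. }
  assert (Ha1 : -1 < a) by nra.
  set (d := 1 + a).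
  assert (HD : L d b <> vzero) by (intro E; apply L_eq0 in E; unfold d in E; lra).
  pose proof (norm_pos _ HD) as HnD.
  set (nD := N (L d b)) in HnD.
  set (v := vscale (/ nD) (L d b)).
  set (v' := vscale (/ nD) (L (- b) d)).
  assert (Hv : N v = 1) by now apply norm_unit_scale.
  assert (Hv' : N v' = 1).
  { unfold v'; rewrite norm_scale_nonneg by (left; apply Rinv_0_lt_compat; lra).
    fold (M (- b) d); rewrite M_rotate; change (M d b) with nD; field; lra. }
  assert (Hvv : isosceles_orth N v v').
  { unfold isosceles_orth.
    replace (vadd v v') with (vscale (/ nD) (L (d - b) (b + d))) by (unfold v, v', L; vec_eq).
    replace (vsub v v') with (vscale (/ nD) (L (d + b) (b - d))) by (unfold v, v', L; vec_eq).
    rewrite !norm_scale; f_equal; fold (M (d - b) (b + d)) (M (d + b) (b - d)).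
    rewrite (M_reflect (d + b)), M_swap; f_equal; ring. }
  clearbody nD.
  pose proof (isosceles_lincomb_even HB v v' (nD / 2) (nD * (- b) / (2 * d)) ltac:(lra) Hvv) as E.
  assert (Hd : 0 < d) by (unfold d; lra).
  replace (vadd (vscale (nD / 2) v) (vscale (nD * (- b) / (2 * d)) v'))
    with (L ((d * d + b * b) / (2 * d)) 0) in E by (unfold v, v', L; vec_eq).
  replace (vadd (vscale (nD / 2) v) (vscale (- (nD * (- b) / (2 * d))) v'))
    with (L ((d * d - b * b) / (2 * d)) b) in E by (unfold v, v', L; vec_eq).
  replace (d * d + b * b) with (2 * d) in E by (unfold d; nra).
  replace (d * d - b * b) with (2 * d * a) in E by (unfold d; nra).
  replace (2 * d / (2 * d)) with 1 in E by (field; lra).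
  replace (2 * d * a / (2 * d)) with a in E by (field; lra).
  unfold M; rewrite <- E; unfold L.
  replace (vadd (vscale 1 e1) (vscale 0 e2)) with e1 by vec_eq; exact He1.
Qed.

Lemma isosceles_basis_euclidean x y : N (vadd (vscale x e1) (vscale y e2)) = sqrt (x * x + y * y).
Proof.
  fold (L x y) (M x y).
  destruct (Req_dec (x * x + y * y) 0) as [H0|H0].
  { assert (x = 0 /\ y = 0) as [-> ->] by (split; nra).
    rewrite H0, sqrt_0; unfold M, L.
    replace (vadd (vscale 0 e1) (vscale 0 e2)) with vzero by vec_eq; apply norm_zero. }
  assert (Hp : 0 < x * x + y * y) by nra.
  set (r := sqrt (x * x + y * y)).
  assert (Hr : 0 < r) by (apply sqrt_lt_R0; auto).
  assert (Hrr : r * r = x * x + y * y) by (apply sqrt_sqrt; lra).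
  unfold M; replace (L x y) with (vscale r (L (x / r) (y / r))) by (unfold L; vec_eq).
  rewrite norm_scale_nonneg by lra; fold (M (x / r) (y / r)).
  rewrite M_unit_circle; [ring|].
  replace ((x / r) * (x / r) + (y / r) * (y / r)) with ((x * x + y * y) / (r * r)) by (field; lra).
  rewrite Hrr; field; lra.
Qed.

End IsoscelesBasis.

Lemma isosceles_birkhoff_inner_product : isosceles_birkhoff N -> inner_product_norm N.
Proof.
  intro HB.
  assert (H10 : (1, 0) <> vzero) by (intro E; injection E; lra).
  set (e1 := vscale (/ N (1, 0)) (1, 0)).
  assert (He1 : N e1 = 1) by now apply norm_unit_scale.
  destruct (isosceles_unit_exists e1) as [e2 [He2 Hiso]].
  apply (inner_product_norm_of_basis N e1 e2).
  - now apply isosceles_basis_det.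
  - now apply isosceles_basis_euclidean.
Qed.

(** * The constant [c_B] *)

Lemma P_I_iff x w : P_I N x w <->
  exists z, isosceles_orth N z x /\ N z <= 1 /\ z <> vzero /\ w = vscale (/ N z) z.
Proof.
  assert (Hbis : forall z, vsub z (vopp x) = vadd z x) by (intro; vec_eq).
  unfold P_I, bis, isosceles_orth; split; intros [z Hz]; exists z; rewrite Hbis in *; exact Hz.
Qed.

Lemma cB_set_lower_bound beta :
  (forall x z s, N x = 1 -> isosceles_orth N z x -> z <> vzero ->
     beta * N z <= N (vadd z (vscale s x))) ->
  forall r, cB_set N r -> beta <= r.
Proof.
  intros Hbound r [x [w [Hx [HP [_ Hglb]]]]].
  apply P_I_iff in HP as [z [Hiso [_ [Hz ->]]]].
  pose proof (norm_pos z Hz).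
  apply Hglb; intros y [t ->].
  replace (vadd (vscale (/ N z) z) (vscale t x)) with (vscale (/ N z) (vadd z (vscale (t * N z) x)))
    by vec_eq.
  rewrite norm_scale_nonneg by (left; apply Rinv_0_lt_compat; lra).
  apply (Rmult_le_reg_l (N z)); [lra|].
  rewrite <- Rmult_assoc, Rinv_r, Rmult_1_l by lra.
  rewrite Rmult_comm; apply Hbound; auto.
Qed.

(* This is [c_B >= 1/2], stronger than the bound [1/3] of the statement. *)
Lemma cB_set_ge_half r : cB_set N r -> 1/2 <= r.
Proof.
  apply cB_set_lower_bound; intros x z s Hx Hiso _.
  pose proof (isosceles_half_birkhoff x z s Hx Hiso); lra.
Qed.

Lemma cB_set_le1 r : cB_set N r -> r <= 1.
Proof.
  intros [x [w [Hx [HP [Hlb _]]]]].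
  apply P_I_iff in HP as [z [_ [_ [Hz ->]]]].
  rewrite <- (norm_unit_scale z Hz).
  apply Hlb; exists 0; f_equal; symmetry; apply injective_projections; simpl; ring.
Qed.

Lemma cB_set_nonempty : exists r, cB_set N r.
Proof.
  assert (H10 : (1, 0) <> vzero) by (intro E; injection E; lra).
  set (x := vscale (/ N (1, 0)) (1, 0)).
  assert (Hx : N x = 1) by now apply norm_unit_scale.
  destruct (isosceles_unit_exists x) as [z [Hz Hiso]].
  assert (Hz0 : z <> vzero) by (intro E; rewrite E, norm_zero in Hz; lra).
  destruct (sine_exists (vscale (/ N z) z) x) as [r Hr].
  exists r, x, (vscale (/ N z) z); split; [exact Hx | split; [|exact Hr]].
  apply P_I_iff; exists z; repeat split; auto; [|lra].
  now apply isosceles_orth_sym.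
Qed.

Lemma birkhoff_orth_scale a b z x : 0 < a -> b <> 0 ->
  birkhoff_orth N (vscale a z) (vscale b x) -> birkhoff_orth N z x.
Proof.
  intros Ha Hb Hbirk t; specialize (Hbirk (a * t / b)).
  replace (vadd (vscale a z) (vscale (a * t / b) (vscale b x))) with (vscale a (vadd z (vscale t x)))
    in Hbirk by vec_eq.
  rewrite !norm_scale_nonneg in Hbirk by lra.
  now apply (Rmult_le_reg_l a).
Qed.

Lemma isosceles_orth_scale a z x :
  isosceles_orth N z x -> isosceles_orth N (vscale a z) (vscale a x).
Proof.
  unfold isosceles_orth; intro Hiso.
  replace (vadd (vscale a z) (vscale a x)) with (vscale a (vadd z x)) by vec_eq.
  replace (vsub (vscale a z) (vscale a x)) with (vscale a (vsub z x)) by vec_eq.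
  now rewrite !norm_scale, Hiso.
Qed.

Lemma birkhoff_of_cB_set_ge1 x z : (forall r, cB_set N r -> 1 <= r) ->
  N x = 1 -> z <> vzero -> N z <= 1 -> isosceles_orth N z x -> birkhoff_orth N z x.
Proof.
  intros Hge1 Hx Hz Hz1 Hiso.
  pose proof (norm_pos z Hz).
  destruct (sine_exists (vscale (/ N z) z) x) as [r Hr].
  assert (Hr1 : 1 <= r).
  { apply Hge1; exists x, (vscale (/ N z) z); split; [exact Hx | split; [|exact Hr]].
    apply P_I_iff; exists z; auto. }
  apply (birkhoff_orth_scale (/ N z) 1); [apply Rinv_0_lt_compat; lra | lra |].
  intro t; rewrite norm_unit_scale by exact Hz.
  apply (Rle_trans _ r _ Hr1), Hr; exists t; f_equal; vec_eq.
Qed.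

Lemma isosceles_birkhoff_of_cB_set_ge1 :
  (forall r, cB_set N r -> 1 <= r) -> isosceles_birkhoff N.
Proof.
  intros Hge1 x z Hx0 Hzx Hiso.
  destruct (classic (z = vzero)) as [->|Hz].
  { intro t; rewrite norm_zero; apply norm_nonneg. }
  pose proof (norm_pos x Hx0).
  assert (Hinv : 0 < / N x) by (apply Rinv_0_lt_compat; lra).
  apply (birkhoff_orth_scale (/ N x) (/ N x)); [lra | lra |].
  apply birkhoff_of_cB_set_ge1; auto.
  - now apply norm_unit_scale.
  - apply vscale_neq0; [lra | exact Hz].
  - rewrite norm_scale_nonneg by lra.
    apply (Rmult_le_reg_l (N x)); [lra|].
    rewrite <- Rmult_assoc, Rinv_r; lra.
  - now apply isosceles_orth_scale.
Qed.

Lemma inner_product_isosceles_birkhoff x z :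
  inner_product_norm N -> isosceles_orth N z x -> birkhoff_orth N z x.
Proof.
  intros [ip [Hsym [Hadd [Hsc [Hpos HN]]]]] Hiso t.
  assert (Hnn : forall u, 0 <= ip u u).
  { intro u; destruct (classic (u = vzero)) as [->|Hu]; [|left; auto].
    replace vzero with (vscale 0 vzero) by vec_eq; rewrite Hsc; lra. }
  assert (Hsq : forall u, N u * N u = ip u u) by (intro u; rewrite HN; apply sqrt_sqrt; auto).
  assert (Hexp : forall a b u v, ip (vadd (vscale a u) (vscale b v)) (vadd (vscale a u) (vscale b v))
                   = a * a * ip u u + 2 * a * b * ip u v + b * b * ip v v).
  { intros a b u v; rewrite Hadd, !Hsc, (Hsym u), (Hsym v), !Hadd, !Hsc, (Hsym v u); ring. }
  assert (Hzx : ip z x = 0).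
  { unfold isosceles_orth in Hiso.
    replace (vadd z x) with (vadd (vscale 1 z) (vscale 1 x)) in Hiso by vec_eq.
    replace (vsub z x) with (vadd (vscale 1 z) (vscale (-1) x)) in Hiso by vec_eq.
    apply (f_equal (fun y => y * y)) in Hiso; rewrite !Hsq, !Hexp in Hiso; lra. }
  assert (Hline : N (vadd z (vscale t x)) * N (vadd z (vscale t x)) = N z * N z + t * t * ip x x).
  { replace (vadd z (vscale t x)) with (vadd (vscale 1 z) (vscale t x)) by vec_eq.
    rewrite Hsq, Hexp, Hzx, <- (Hsq z); ring. }
  pose proof (Hnn x); pose proof (norm_nonneg z); pose proof (norm_nonneg (vadd z (vscale t x))).
  nra.
Qed.

End NormedPlane.

Theorem theorem4p1 (N : vec -> R) (hN : is_norm N) :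
  (exists c, cB N c) /\
  (forall c, cB N c ->
     1/3 <= c /\ c <= 1 /\ (c = 1 <-> inner_product_norm N)).
Proof.
  destruct (cB_set_nonempty N hN) as [r0 Hr0].
  split.
  { apply (is_inf_exists _ (1/2)); [now exists r0|apply cB_set_ge_half, hN]. }
  intros c [Hlb Hglb].
  assert (Hhalf : 1/2 <= c) by (apply Hglb, cB_set_ge_half, hN).
  assert (Hle1 : c <= 1) by (apply (Rle_trans _ r0); [apply Hlb | apply (cB_set_le1 N hN)]; auto).
  repeat split; try lra.
  - intros ->; apply (isosceles_birkhoff_inner_product N hN), (isosceles_birkhoff_of_cB_set_ge1 N hN).
    exact Hlb.
  - intro Hip; apply Rle_antisym; auto; apply Hglb.
    apply (cB_set_lower_bound N hN); intros x z s _ Hiso _; rewrite Rmult_1_l.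
    now apply (inner_product_isosceles_birkhoff N hN).
Qed.
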